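(* Let $n\ge 2$, $m\ge1$, $\delta>0$, and $0<k<n$ an integer. Then \[ R_k(\delta) \leq (1 - \rho_k^2)^{-m(m+1)/4} \exp\left(|\rho_k|\, m\,\delta^2\right). \]
   Context: An $m\times m$ GOE matrix is a random symmetric matrix whose entries on and above the diagonal are independent centered normal variables, with variance $2$ on the diagonal and variance $1$ off the diagonal. Two GOE matrices $X,Y$ have correlation $\rho\in(-1,1)$ if the pairs $(X_{ij},Y_{ij})$, $i\le j$, are independent across index pairs, each jointly normal with $\mathrm{corr}(X_{ij},Y_{ij})=\rho$. Let $\rho_k = 1-2k/n$ and \[R_k(\delta) = \frac{\mathbb{P}(\|X_k\| \leq \delta,\ \|Y_k\| \leq \delta)}{\mathbb{P}(\|X\| \leq \delta)^2},\] where $X$ is an $m\times m$ GOE matrix and $X_k,Y_k$ are $m\times m$ GOE matrices with correlation $\rho_k$; $\|\cdot\|$ is the spectral norm. *)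

From HB Require Import structures.
From mathcomp Require Import all_boot all_order all_algebra.
From mathcomp Require Import all_classical all_reals all_analysis.
Set Implicit Arguments. Unset Strict Implicit. Unset Printing Implicit Defensive.
Import Order.TTheory GRing.Theory Num.Theory.
Local Open Scope classical_set_scope.
Local Open Scope ring_scope.

Section GOE.
Variable R : realType.

Definition spec_norm (m : nat) (A : 'M[R]_m) : R :=
  sup [set r | exists x : 'cV[R]_m,
         \sum_i (x i 0) ^+ 2 = 1 /\ r = Num.sqrt (\sum_i ((A *m x) i 0) ^+ 2)].

(* Index pairs (i,j) with i <= j : the independent entries of a symmetric matrix. *)
Definition upper_pairs (m : nat) : seq ('I_m * 'I_m) :=
  [seq p <- [seq (i, j) | i <- enum 'I_m, j <- enum 'I_m] | (val p.1 <= val p.2)%N].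

Definition symmx (m : nat) (v : 'I_m * 'I_m -> R) : 'M[R]_m :=
  \matrix_(i, j) (if (i <= j)%N then v (i, j) else v (j, i)).

Definition goe_var (m : nat) (p : 'I_m * 'I_m) : R :=
  if p.1 == p.2 then 2 else 1.

Definition gauss_dens (s2 x : R) : R :=
  expR (- (x ^+ 2) / (2 * s2)) / Num.sqrt (2 * pi * s2).

(* Density of a centered bivariate normal vector whose coordinates both have
   variance s2 and correlation rho (|rho| < 1). *)
Definition bigauss_dens (s2 rho x y : R) : R :=
  expR (- (x ^+ 2 - 2 * rho * x * y + y ^+ 2) / (2 * s2 * (1 - rho ^+ 2)))
  / (2 * pi * s2 * Num.sqrt (1 - rho ^+ 2)).

Definition upd (K : eqType) (f : K -> R) (k : K) (x : R) : K -> R :=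
  fun k' => if k' == k then x else f k'.

(* Iterated Lebesgue integral over the coordinates listed in s
   (the Lebesgue integral on R^s, for nonnegative integrands, by Tonelli). *)
Fixpoint iter_int (K : eqType) (s : seq K) (F : (K -> R) -> \bar R) : \bar R :=
  match s with
  | [::] => F (fun _ => 0)
  | k :: s' =>
      (\int[@lebesgue_measure R]_(x in setT)
          iter_int s' (fun v => F (upd v k x)))%E
  end.

(* P(||X|| <= delta) for X an m x m GOE matrix. *)
Definition goe_prob (m : nat) (delta : R) : \bar R :=
  iter_int (upper_pairs m)
    (fun v => ((if spec_norm (symmx v) <= delta then 1 else 0)
               * \prod_(p <- upper_pairs m) gauss_dens (goe_var p) (v p))%:E).

(* P(||X|| <= delta, ||Y|| <= delta) for X, Y m x m GOE matrices with
   correlation rho: coordinate (p,false) is X_p, (p,true) is Y_p. *)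
Definition goe_pair_prob (m : nat) (rho delta : R) : \bar R :=
  iter_int [seq (p, b) | p <- upper_pairs m, b <- [:: false; true]]
    (fun w =>
       ((if (spec_norm (symmx (fun p => w (p, false))) <= delta)
            && (spec_norm (symmx (fun p => w (p, true))) <= delta)
         then 1 else 0)
        * \prod_(p <- upper_pairs m)
            bigauss_dens (goe_var p) rho (w (p, false)) (w (p, true)))%:E).

Definition rho_k (n k : nat) : R := 1 - 2 * k%:R / n%:R.

Definition Rk (n m k : nat) (delta : R) : R :=
  fine (goe_pair_prob m (rho_k n k) delta) / (fine (goe_prob m delta)) ^+ 2.

End GOE.

From HB Require Import structures.
From mathcomp Require Import all_boot all_order all_algebra.
From mathcomp Require Import all_classical all_reals all_analysis.
From mathcomp Require Import normal_distribution.
From mathcomp.algebra_tactics Require Import ring lra.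
Import Order.TTheory GRing.Theory Num.Theory.
Local Open Scope ring_scope.
Set Implicit Arguments. Unset Strict Implicit. Unset Printing Implicit Defensive.

(* Entrywise, the bivariate normal density with correlation rho is at most
   (1 - rho^2)^(-1/2) exp(|rho| (x^2 + y^2) / (2 s2)) times the product of its
   two marginal densities.  On the event ||X||, ||Y|| <= delta, the squared
   Frobenius norm sum_(i <= j) (2 / var_ij) X_ij^2 of X (and of Y) is at most
   m delta^2, so the exponential factors multiply to at most
   exp(|rho| m delta^2), while the m(m+1)/2 square-root factors give
   (1 - rho^2)^(-m(m+1)/4).  What remains factors into the integrand of
   P(||X|| <= delta) for X times the same for Y, and integrating this
   product over the independent coordinates gives P(||X|| <= delta)^2. *)

(* No measurability is assumed in the integral lemmas: the integrands below
   contain the spectral norm, whose measurability is never established. *)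
Section ge0_integralT.
Local Open Scope ereal_scope.
Context d (T : measurableType d) (R : realType) (mu : {measure set T -> \bar R}).
Import HBNNSimple.

Lemma ge0_le_integralT (f g : T -> \bar R) :
  (forall x, 0 <= f x) -> (forall x, f x <= g x) ->
  \int[mu]_(x in setT) f x <= \int[mu]_(x in setT) g x.
Proof.
move=> f0 fg; have g0 x : 0 <= g x := le_trans (f0 x) (fg x).
rewrite !ge0_integralTE //.
by apply: ereal_sup_le => _ [h hf <-]; exists h => //= x; apply: le_trans (hf x) (fg x).
Qed.

Lemma ge0_integralZlT_le (k : R) (f : T -> \bar R) :
  (0 <= k)%R -> (forall x, 0 <= f x) ->
  \int[mu]_(x in setT) (k%:E * f x) <= k%:E * \int[mu]_(x in setT) f x.
Proof.
move=> k0 f0; have kf0 x : 0 <= k%:E * f x by rewrite mule_ge0.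
rewrite !ge0_integralTE //; apply: ge_ereal_sup => _ [h /= hkf <-].
have [k00 | kn0] := eqVneq k 0%R.
  subst k.
  have h0 x : (h x <= nnsfun0 x)%R by have := hkf x; rewrite mul0e lee_fin.
  by rewrite mul0e (le_trans (le_sintegral _ h0)) // sintegral0.
have kV0 : (0 <= k^-1)%R by rewrite invr_ge0.
have hkV : sintegral mu (scale_nnsfun h kV0) = k^-1%:E * sintegral mu h.
  by rewrite -sintegralrM.
have : sintegral mu (scale_nnsfun h kV0) <= ereal_sup [set sintegral mu g | g in
    [set g : {nnsfun T >-> R} | forall x, (g x)%:E <= f x]].
  apply: ereal_sup_ubound; exists (scale_nnsfun h kV0) => //= x.
  rewrite EFinM (le_trans (lee_wpmul2l _ (hkf x))) ?lee_fin //.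
  by rewrite muleA -EFinM mulVf ?mul1e.
rewrite hkV => hf.
have -> : sintegral mu h = k%:E * (k^-1%:E * sintegral mu h).
  by rewrite muleA -EFinM divff ?mul1e.
by rewrite lee_wpmul2l ?lee_fin.
Qed.

End ge0_integralT.

Section ge0_integral2.
Local Open Scope ereal_scope.
Context d1 d2 (T1 : measurableType d1) (T2 : measurableType d2) (R : realType).
Variables (mu1 : {measure set T1 -> \bar R}) (mu2 : {measure set T2 -> \bar R}).

Lemma ge0_integral2_le_mul (f : T1 -> T2 -> \bar R) (a : T1 -> \bar R) (b : T2 -> \bar R) :
  (forall x y, 0 <= f x y) -> (forall x, 0 <= a x) -> (forall y, 0 <= b y) ->
  (forall x, a x \is a fin_num) -> \int[mu2]_(y in setT) b y \is a fin_num ->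
  (forall x y, f x y <= a x * b y) ->
  \int[mu1]_(x in setT) \int[mu2]_(y in setT) f x y <=
  \int[mu1]_(x in setT) a x * \int[mu2]_(y in setT) b y.
Proof.
move=> f0 a0 b0 afin bfin fab.
have Ib0 : 0 <= \int[mu2]_(y in setT) b y by apply: integral_ge0.
apply: (@le_trans _ _ (\int[mu1]_(x in setT) ((fine (\int[mu2]_(y in setT) b y))%:E * a x))).
  apply: ge0_le_integralT => x; first exact: integral_ge0.
  rewrite fineK // muleC -(fineK (afin x)).
  apply: le_trans _ (ge0_integralZlT_le _ (fine_ge0 (a0 x)) b0).
  by apply: ge0_le_integralT => // y; rewrite fineK.
by rewrite muleC -{2}(fineK bfin); apply: ge0_integralZlT_le => //; apply: fine_ge0.
Qed.

End ge0_integral2.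

Section iter_int.
Local Open Scope ereal_scope.
Context (R : realType).
Local Notation mu := (@lebesgue_measure R).

Lemma iter_int_ge0 (K : eqType) (s : seq K) (F : (K -> R) -> \bar R) :
  (forall v, 0 <= F v) -> 0 <= iter_int s F.
Proof.
elim: s F => [|k s IH] F F0 /=; first exact: F0.
by apply: integral_ge0 => x _; apply: IH.
Qed.

Lemma le_iter_int (K : eqType) (s : seq K) (F G : (K -> R) -> \bar R) :
  (forall v, 0 <= F v) -> (forall v, F v <= G v) -> iter_int s F <= iter_int s G.
Proof.
elim: s F G => [|k s IH] F G F0 FG /=; first exact: FG.
by apply: ge0_le_integralT => x; [apply: iter_int_ge0 | apply: IH].
Qed.

Lemma iter_intZl_le (K : eqType) (s : seq K) (c : R) (F : (K -> R) -> \bar R) :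
  (0 <= c)%R -> (forall v, 0 <= F v) ->
  iter_int s (fun v => c%:E * F v) <= c%:E * iter_int s F.
Proof.
move=> c0; elim: s F => [|k s IH] F F0 //=.
apply: le_trans _ (ge0_integralZlT_le _ c0 _); last by move=> x; apply: iter_int_ge0.
apply: ge0_le_integralT => x; last exact: IH.
by apply: iter_int_ge0 => v; rewrite mule_ge0.
Qed.

Lemma upd_pair (K : eqType) (w : K * bool -> R) (k : K) (x y : R) (b : bool) :
  (fun p => upd (upd w (k, true) y) (k, false) x (p, b)) =
  upd (fun p => w (p, b)) k (if b then y else x).
Proof.
by apply: funext => p; rewrite /upd !xpair_eqE; case: b; rewrite ?andbT ?andbF; case: (p == k).
Qed.

(* Domination by a product of probability densities keeps every partial
   iterated integral finite, which is what allows constants to be pulled out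
   of the integrals in [iter_int_pair_le]. *)
Variables (K : eqType) (psi : K -> R -> R).
Hypothesis psi_ge0 : forall k x, (0 <= psi k x)%R.
Hypothesis integral_psi : forall k, \int[mu]_(x in setT) (psi k x)%:E = 1.

Definition dominated (s : seq K) (c : R) (g : (K -> R) -> \bar R) :=
  forall v, g v <= (c * \prod_(j <- s) psi j (v j))%:E.

Lemma dominated_upd k s c g x : k \notin s -> dominated (k :: s) c g ->
  dominated s (c * psi k x) (fun v => g (upd v k x)).
Proof.
move=> ks gs v; apply: le_trans (gs _) _; rewrite big_cons /upd eqxx mulrA.
suff -> : (\prod_(j <- s) psi j (if j == k then x else v j) =
    \prod_(j <- s) psi j (v j))%R by [].
apply: eq_big_seq => j js; case: eqP => // jk.
by rewrite -jk js in ks.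
Qed.

Lemma iter_int_dominated_le s c g : uniq s -> (0 <= c)%R -> (forall v, 0 <= g v) ->
  dominated s c g -> iter_int s g <= c%:E.
Proof.
elim: s c g => [|k s IH] c g /=.
  by move=> _ _ _ /(_ (fun _ => 0%R)); rewrite big_nil mulr1.
move=> /andP[ks us] c0 g0 gs.
apply: (@le_trans _ _ (\int[mu]_(x in setT) (c%:E * (psi k x)%:E))).
  apply: ge0_le_integralT => x; first exact: iter_int_ge0.
  by rewrite -EFinM; apply: IH => //; [rewrite mulr_ge0 | exact: dominated_upd].
apply: le_trans (ge0_integralZlT_le _ c0 _) _; first by move=> x; rewrite lee_fin.
by rewrite integral_psi mule1.
Qed.

Lemma iter_int_pair_le s g h cg ch : uniq s -> (0 <= cg)%R -> (0 <= ch)%R ->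
  (forall v, 0 <= g v) -> (forall v, 0 <= h v) -> dominated s cg g -> dominated s ch h ->
  iter_int [seq (p, b) | p <- s, b <- [:: false; true]]
    (fun w => g (fun p => w (p, false)) * h (fun p => w (p, true)))
  <= iter_int s g * iter_int s h.
Proof.
elim: s g h cg ch => [|k s IH] g h cg ch //=.
move=> /andP[ks us] cg0 ch0 g0 h0 gs hs.
apply: ge0_integral2_le_mul.
- by move=> x y; apply: iter_int_ge0 => w; rewrite mule_ge0.
- by move=> x; apply: iter_int_ge0.
- by move=> y; apply: iter_int_ge0.
- move=> x; rewrite ge0_fin_numE; last exact: iter_int_ge0.
  apply: le_lt_trans (iter_int_dominated_le us _ _ (dominated_upd x ks gs)) (ltry _) => //.
  by rewrite mulr_ge0.
- rewrite ge0_fin_numE; last by apply: integral_ge0 => y _; apply: iter_int_ge0.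
  have hk : iter_int (k :: s) h <= ch%:E.
    by apply: iter_int_dominated_le => //=; rewrite ks.
  exact: le_lt_trans hk (ltry _).
- move=> x y.
  rewrite [X in iter_int _ X](_ : _ =
     fun w => g (upd (fun p => w (p, false)) k x) * h (upd (fun p => w (p, true)) k y)).
    exact: IH us (mulr_ge0 cg0 (psi_ge0 _ _)) (mulr_ge0 ch0 (psi_ge0 _ _))
      (fun _ => g0 _) (fun _ => h0 _) (dominated_upd x ks gs) (dominated_upd y ks hs).
  apply: funext => w; congr (g _ * h _).
  - exact: (upd_pair _ _ _ _ false).
  - exact: (upd_pair _ _ _ _ true).
Qed.

End iter_int.

Section gaussian_densities.
Context (R : realType).

Lemma gauss_densE (s2 : R) : 0 < s2 -> gauss_dens s2 = normal_pdf 0 (Num.sqrt s2).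
Proof.
move=> s0; apply/funext => x.
rewrite normal_pdfE ?sqrtr_eq0 -?ltNge // /normal_peak /normal_fun subr0 sqr_sqrtr ?ltW //.
by rewrite /gauss_dens [RHS]mulrC; congr (expR (_ / _) / Num.sqrt _); ring.
Qed.

Lemma integral_gauss_dens (s2 : R) : 0 < s2 ->
  (\int[lebesgue_measure]_(x in setT) (gauss_dens s2 x)%:E = 1)%E.
Proof. by move=> s0; rewrite gauss_densE // integral_normal_pdf. Qed.

Lemma gauss_dens_ge0 (s2 x : R) : 0 <= gauss_dens s2 x.
Proof. by rewrite divr_ge0 ?expR_ge0 ?sqrtr_ge0. Qed.

Lemma bigauss_dens_ge0 (s2 rho x y : R) : 0 <= s2 -> 0 <= bigauss_dens s2 rho x y.
Proof. by move=> s0; rewrite divr_ge0 ?expR_ge0 // !mulr_ge0 ?sqrtr_ge0 ?pi_ge0. Qed.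

Lemma bigauss_exponent_le (s2 rho x y : R) : 0 < s2 -> rho ^+ 2 < 1 ->
  - (x ^+ 2 - 2 * rho * x * y + y ^+ 2) / (2 * s2 * (1 - rho ^+ 2)) <=
  - (x ^+ 2) / (2 * s2) + - (y ^+ 2) / (2 * s2) + `|rho| * (x ^+ 2 + y ^+ 2) / (2 * s2).
Proof.
move=> s0 rho1; set a := `|rho|; set S := x ^+ 2 + y ^+ 2.
set Q := x ^+ 2 - 2 * rho * x * y + y ^+ 2.
have q0 : 0 < 1 - rho ^+ 2 by rewrite subr_gt0.
have S0 : 0 <= S by rewrite addr_ge0 ?sqr_ge0.
have cross : 2 * rho * x * y <= a * S.
  rewrite /a /S; case: (lerP 0 rho) => r0.
    by rewrite ger0_norm //; have := mulr_ge0 r0 (sqr_ge0 (x - y)); nra.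
  rewrite ltr0_norm //; have nr : 0 <= - rho by rewrite oppr_ge0 ltW.
  by have := mulr_ge0 nr (sqr_ge0 (x + y)); nra.
have a1 : a <= 1.
  have aa : a ^+ 2 = rho ^+ 2 by rewrite /a real_normK ?num_real.
  by have := normr_ge0 rho; nra.
have key : (1 - a) * S * (1 - rho ^+ 2) <= Q.
  have a1' : 0 <= 1 - a by rewrite subr_ge0.
  have -> : Q = S - 2 * rho * x * y by rewrite /Q /S; ring.
  by have := mulr_ge0 (mulr_ge0 a1' S0) (sqr_ge0 rho); nra.
have -> : - (x ^+ 2) / (2 * s2) + - (y ^+ 2) / (2 * s2) + a * S / (2 * s2) =
    - ((1 - a) * S * (1 - rho ^+ 2)) / (2 * s2 * (1 - rho ^+ 2)).
  by rewrite /S; field; rewrite !gt_eqF.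
by apply: ler_wpM2r; [rewrite invr_ge0 ltW // !mulr_gt0 | rewrite lerN2].
Qed.

Lemma bigauss_dens_le (s2 rho x y : R) : 0 < s2 -> rho ^+ 2 < 1 ->
  bigauss_dens s2 rho x y <= (Num.sqrt (1 - rho ^+ 2))^-1 *
    expR (`|rho| * (x ^+ 2 + y ^+ 2) / (2 * s2)) * (gauss_dens s2 x * gauss_dens s2 y).
Proof.
move=> s0 rho1; rewrite /bigauss_dens /gauss_dens.
have q0 : 0 < 1 - rho ^+ 2 by rewrite subr_gt0.
have a0 : 0 < 2 * pi * s2 by rewrite !mulr_gt0 ?pi_gt0.
set sa := Num.sqrt (2 * pi * s2); set sq := Num.sqrt (1 - rho ^+ 2).
have sa0 : 0 < sa by rewrite sqrtr_gt0.
have sq0 : 0 < sq by rewrite sqrtr_gt0.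
have -> : 2 * pi * s2 * sq = sa ^+ 2 * sq by rewrite sqr_sqrtr // ltW.
have -> : sq^-1 * expR (`|rho| * (x ^+ 2 + y ^+ 2) / (2 * s2)) *
    (expR (- x ^+ 2 / (2 * s2)) / sa * (expR (- y ^+ 2 / (2 * s2)) / sa)) =
  expR (- x ^+ 2 / (2 * s2) + - y ^+ 2 / (2 * s2) + `|rho| * (x ^+ 2 + y ^+ 2) / (2 * s2))
  / (sa ^+ 2 * sq).
  by rewrite !expRD; field; rewrite !gt_eqF.
apply: ler_wpM2r; first by rewrite invr_ge0 ltW // mulr_gt0 // exprn_gt0.
by rewrite ler_expR; apply: bigauss_exponent_le.
Qed.

End gaussian_densities.

Section upper_pairs.
Context (R : realType).

Lemma uniq_upper_pairs m : uniq (upper_pairs m).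
Proof.
rewrite filter_uniq // allpairs_uniq ?enum_uniq //.
by move=> [a b] [c d] _ _ /= [-> ->].
Qed.

Lemma goe_var_gt0 m (p : 'I_m * 'I_m) : 0 < goe_var R p.
Proof. by rewrite /goe_var; case: eqP. Qed.

Lemma goe_weightE m (p : 'I_m * 'I_m) : 2 / goe_var R p = if p.1 == p.2 then 1 else 2.
Proof. by rewrite /goe_var; case: eqP => _; rewrite ?divff ?divr1. Qed.

Lemma sum_upper_pairs m (f : 'I_m -> 'I_m -> R) : (forall i j, f i j = f j i) ->
  \sum_(p <- upper_pairs m) 2 / goe_var R p * f p.1 p.2 = \sum_i \sum_j f i j.
Proof.
move=> fC; under eq_bigr do rewrite goe_weightE.
rewrite /upper_pairs big_filter big_mkcond big_allpairs /= big_enum /=.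
under eq_bigr do rewrite big_enum /=.
pose g (i j : 'I_m) := if (i < j)%N then f i j else if i == j then f i j / 2 else 0.
have fE (i j : 'I_m) : f i j = g i j + g j i.
  rewrite /g; case: (ltngtP i j) => [ij|ji|/val_inj ->].
  - by rewrite -[j == i]val_eqE /= (gtn_eqF ij) addr0.
  - by rewrite -[i == j]val_eqE /= (gtn_eqF ji) add0r fC.
  - by rewrite eqxx -splitr.
have upperE (i j : 'I_m) :
    (if (i <= j)%N then (if i == j then 1 else 2) * f i j else 0) = g i j + g i j.
  rewrite /g; case: (ltngtP i j) => [ij|ji|/val_inj ->].
  - by rewrite -[i == j]val_eqE /= (ltn_eqF ij) mulr_natl mulr2n.
  - by rewrite -[i == j]val_eqE /= (gtn_eqF ji) addr0.
  - by rewrite eqxx mul1r -splitr.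
transitivity (\sum_i \sum_j (g i j + g i j)).
  by apply: eq_big => // i _; apply: eq_big => // j _; apply: upperE.
under [RHS]eq_bigr do under eq_bigr do rewrite fE.
rewrite [RHS](eq_bigr (fun i => \sum_j g i j + \sum_j g j i)) => [|i _]; last first.
  by rewrite big_split.
rewrite big_split /= [X in _ = _ + X]exchange_big /= -big_split /=.
by apply: eq_bigr => i _; rewrite big_split.
Qed.

Lemma size_upper_pairs m : 2 * (size (upper_pairs m))%:R = (m * (m + 1))%:R :> R.
Proof.
have diagC (i j : 'I_m) : (i == j)%:R = (j == i)%:R :> R by rewrite eq_sym.
have ones := sum_upper_pairs (m := m) (f := fun _ _ => 1 : R) (fun _ _ => erefl).
have diag := sum_upper_pairs diagC.
have two (p : 'I_m * 'I_m) : 2 = 2 / goe_var R p * 1 + 2 / goe_var R p * (p.1 == p.2)%:R.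
  by rewrite goe_weightE; case: eqP => _ /=; rewrite ?mulr1 ?mulr0 ?addr0 // -mulr2n.
rewrite -sum1_size natr_sum mulr_sumr.
rewrite (eq_bigr _ (fun p _ => etrans (mulr1 _) (two p))) big_split /=.
rewrite ones diag; under [X in _ + X]eq_bigr => i _.
  rewrite (bigD1 i) //= eqxx big1 ?addr0 => [|j]; last by rewrite eq_sym => /negbTE ->.
  over.
by rewrite !sumr_const card_ord -mulrnA -mulrnDr mulnDr muln1.
Qed.

Lemma powR_size_upper_pairs (q : R) m : 0 < q ->
  (Num.sqrt q)^-1 ^+ size (upper_pairs m) = powR q (- ((m * (m + 1))%:R / 4)).
Proof.
move=> q0; rewrite -size_upper_pairs.
have -> : 2 * (size (upper_pairs m))%:R / 4 = 2^-1 * (size (upper_pairs m))%:R :> R.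
  by field.
by rewrite powRN powRrM powR12_sqrt ?ltW // powR_mulrn ?sqrtr_ge0 // exprVn.
Qed.

End upper_pairs.

Section frobenius.
Context (R : realType).

Lemma col_norm_le_spec_norm m (A : 'M[R]_m) (j : 'I_m) :
  Num.sqrt (\sum_i A i j ^+ 2) <= spec_norm A.
Proof.
have unit_col : exists x : 'cV[R]_m, \sum_i x i 0 ^+ 2 = 1 /\
    Num.sqrt (\sum_i A i j ^+ 2) = Num.sqrt (\sum_i (A *m x) i 0 ^+ 2).
  exists (delta_mx j 0); split.
    rewrite (bigD1 j) //= mxE eqxx /= expr1n big1 ?addr0 // => i ij.
    by rewrite mxE (negbTE ij) /= expr0n.
  by congr Num.sqrt; apply: eq_bigr => i _; rewrite -colE mxE.
apply: sup_upper_bound => //; split; first by exists (Num.sqrt (\sum_i A i j ^+ 2)).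
exists (Num.sqrt (\sum_i (\sum_k `|A i k|) ^+ 2)) => _ [x [x1 ->]].
rewrite ler_sqrt; last by rewrite sumr_ge0 // => i _; rewrite sqr_ge0.
apply: ler_sum => i _; rewrite -[leLHS]real_normK ?num_real //.
rewrite ler_sqr ?nnegrE ?sumr_ge0 //.
rewrite mxE (le_trans (ler_norm_sum _ _ _)) //; apply: ler_sum => k _.
rewrite normrM ler_piMr //.
rewrite -(expr_le1 (n := 2)) // real_normK ?num_real // -x1.
by rewrite (bigD1 k) //= lerDl sumr_ge0 // => *; rewrite sqr_ge0.
Qed.

Definition sqr_frobenius m (A : 'M[R]_m) := \sum_i \sum_j A i j ^+ 2.

Lemma sqr_frobenius_le m (A : 'M[R]_m) (delta : R) :
  spec_norm A <= delta -> sqr_frobenius A <= m%:R * delta ^+ 2.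
Proof.
move=> Ad; rewrite /sqr_frobenius exchange_big /=.
have -> : m%:R * delta ^+ 2 = \sum_(j < m) delta ^+ 2 by rewrite sumr_const card_ord mulr_natl.
apply: ler_sum => j _.
have colj := le_trans (col_norm_le_spec_norm A j) Ad.
have S0 : 0 <= \sum_i A i j ^+ 2 by rewrite sumr_ge0 // => i _; rewrite sqr_ge0.
by rewrite -(sqr_sqrtr S0) !expr2 ler_pM ?sqrtr_ge0.
Qed.

Lemma sqr_frobenius_symmx m (v : 'I_m * 'I_m -> R) :
  sqr_frobenius (symmx v) = \sum_(p <- upper_pairs m) 2 / goe_var R p * v p ^+ 2.
Proof.
rewrite /sqr_frobenius -(@sum_upper_pairs R m (fun i j => symmx v i j ^+ 2)); last first.
  by move=> i j; rewrite !mxE; case: (ltngtP i j) => // /val_inj ->.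
rewrite /upper_pairs !big_filter; apply: eq_bigr => -[i j] /= ij.
by rewrite mxE ij.
Qed.

End frobenius.

Section goe.
Context (R : realType).

Definition goe_ball_dens m (delta : R) (v : 'I_m * 'I_m -> R) : R :=
  (if spec_norm (symmx v) <= delta then 1 else 0)
  * \prod_(p <- upper_pairs m) gauss_dens (goe_var R p) (v p).

Definition goe_pair_ball_dens m (rho delta : R) (w : 'I_m * 'I_m * bool -> R) : R :=
  (if (spec_norm (symmx (fun p => w (p, false))) <= delta)
      && (spec_norm (symmx (fun p => w (p, true))) <= delta)
   then 1 else 0)
  * \prod_(p <- upper_pairs m) bigauss_dens (goe_var R p) rho (w (p, false)) (w (p, true)).

Lemma goe_probE m (delta : R) :
  goe_prob m delta = iter_int (upper_pairs m) (fun v => (goe_ball_dens delta v)%:E).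
Proof. by []. Qed.

Lemma goe_pair_probE m (rho delta : R) :
  goe_pair_prob m rho delta = iter_int [seq (p, b) | p <- upper_pairs m, b <- [:: false; true]]
    (fun w => (goe_pair_ball_dens rho delta w)%:E).
Proof. by []. Qed.

Lemma goe_ball_dens_ge0 m (delta : R) v : 0 <= goe_ball_dens (m := m) delta v.
Proof.
by rewrite mulr_ge0 ?prodr_ge0 // => [|p _]; [case: ifP | apply: gauss_dens_ge0].
Qed.

Lemma goe_pair_ball_dens_ge0 m (rho delta : R) w :
  0 <= goe_pair_ball_dens (m := m) rho delta w.
Proof.
rewrite mulr_ge0 ?prodr_ge0 // => [|p _]; first by case: ifP.
by rewrite bigauss_dens_ge0 // ltW // goe_var_gt0.
Qed.

Lemma goe_exponent_le m (rho delta : R) (X Y : 'I_m * 'I_m -> R) :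
  spec_norm (symmx X) <= delta -> spec_norm (symmx Y) <= delta ->
  \sum_(p <- upper_pairs m) `|rho| * (X p ^+ 2 + Y p ^+ 2) / (2 * goe_var R p)
  <= `|rho| * m%:R * delta ^+ 2.
Proof.
move=> /sqr_frobenius_le + /sqr_frobenius_le; rewrite !sqr_frobenius_symmx.
set SX := \sum_(p <- _) _; set SY := \sum_(p <- _) _ => fX fY.
have -> : \sum_(p <- upper_pairs m) `|rho| * (X p ^+ 2 + Y p ^+ 2) / (2 * goe_var R p) =
    `|rho| / 4 * (SX + SY).
  rewrite -big_split mulr_sumr; apply: eq_bigr => p _ /=.
  by rewrite /goe_var; case: (p.1 == p.2); field.
have M0 : 0 <= m%:R * delta ^+ 2 by rewrite mulr_ge0 ?sqr_ge0.
have : 0 <= `|rho| * (2 * (m%:R * delta ^+ 2) - SX - SY) by rewrite mulr_ge0 //; lra.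
by have := normr_ge0 rho; nra.
Qed.

Lemma goe_pair_ball_dens_le m (rho delta : R) (w : 'I_m * 'I_m * bool -> R) :
  rho ^+ 2 < 1 ->
  goe_pair_ball_dens rho delta w <=
  powR (1 - rho ^+ 2) (- ((m * (m + 1))%:R / 4)) * expR (`|rho| * m%:R * delta ^+ 2)
  * goe_ball_dens delta (fun p => w (p, false)) * goe_ball_dens delta (fun p => w (p, true)).
Proof.
move=> rho1; have q0 : 0 < 1 - rho ^+ 2 by rewrite subr_gt0.
rewrite /goe_pair_ball_dens /goe_ball_dens.
set X := fun p => w (p, false); set Y := fun p => w (p, true).
case: (boolP (spec_norm (symmx X) <= delta)) => hX; last first.
  by rewrite /= !(mul0r, mulr0).
case: (boolP (spec_norm (symmx Y) <= delta)) => hY; last first.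
  by rewrite /= !(mul0r, mulr0).
rewrite !mul1r -mulrA.
set G := \prod_(p <- _) gauss_dens _ (X p) * _.
apply: le_trans (_ : _ <= \prod_(p <- upper_pairs m) ((Num.sqrt (1 - rho ^+ 2))^-1 *
    expR (`|rho| * (X p ^+ 2 + Y p ^+ 2) / (2 * goe_var R p)) *
    (gauss_dens (goe_var R p) (X p) * gauss_dens (goe_var R p) (Y p)))) _.
  apply: ler_prod => p _.
  by rewrite bigauss_dens_ge0 ?bigauss_dens_le ?goe_var_gt0 // ltW ?goe_var_gt0.
rewrite 3!big_split /= -/G big_const_seq count_predT iter_mulr_1 -expR_sum.
rewrite powR_size_upper_pairs //; apply: ler_wpM2r.
  by rewrite mulr_ge0 ?prodr_ge0 // => p _; apply: gauss_dens_ge0.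
by rewrite ler_wpM2l ?powR_ge0 // ler_expR goe_exponent_le.
Qed.

Lemma goe_pair_prob_le m (rho delta : R) : rho ^+ 2 < 1 ->
  (goe_pair_prob m rho delta <=
   (powR (1 - rho ^+ 2) (- ((m * (m + 1))%:R / 4)) * expR (`|rho| * m%:R * delta ^+ 2))%:E
   * (goe_prob m delta * goe_prob m delta))%E.
Proof.
move=> rho1; set K := powR _ _ * _.
have K0 : 0 <= K by rewrite mulr_ge0 ?powR_ge0 ?expR_ge0.
have G0 (v : 'I_m * 'I_m -> R) : (0 <= (goe_ball_dens delta v)%:E)%E.
  by rewrite lee_fin goe_ball_dens_ge0.
have Gdom : dominated (fun p => gauss_dens (goe_var R p)) (upper_pairs m) 1
    (fun v => (goe_ball_dens delta v)%:E).
  move=> v; rewrite lee_fin mul1r ler_piMl ?prodr_ge0 // => [p _|].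
    exact: gauss_dens_ge0.
  by case: ifP.
rewrite goe_pair_probE goe_probE.
apply: (@le_trans _ _ (iter_int [seq (p, b) | p <- upper_pairs m, b <- [:: false; true]]
    (fun w => K%:E * ((goe_ball_dens delta (fun p => w (p, false)))%:E
                      * (goe_ball_dens delta (fun p => w (p, true)))%:E)))%E).
  apply: le_iter_int => w; first by rewrite lee_fin goe_pair_ball_dens_ge0.
  by rewrite -!EFinM lee_fin mulrA goe_pair_ball_dens_le.
apply: le_trans (iter_intZl_le _ K0 _) _; first by move=> w; rewrite mule_ge0.
rewrite lee_wpmul2l ?lee_fin //.
have gauss_ge0 (p : 'I_m * 'I_m) x : 0 <= gauss_dens (goe_var R p) x := gauss_dens_ge0 _ x.
have integral_gauss (p : 'I_m * 'I_m) := integral_gauss_dens (goe_var_gt0 R p).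
apply: (iter_int_pair_le gauss_ge0 integral_gauss (uniq_upper_pairs m) ler01 ler01 G0 G0);
  exact: Gdom.
Qed.

End goe.

Lemma sqr_rho_k_lt1 (R : realType) n k : (0 < k)%N -> (k < n)%N -> rho_k R n k ^+ 2 < 1.
Proof.
move=> k0 kn; have n0 : 0 < n%:R :> R by rewrite ltr0n (ltn_trans k0 kn).
have t0 : 0 < k%:R / n%:R :> R by rewrite divr_gt0 // ltr0n.
have t1 : k%:R / n%:R < 1 :> R by rewrite ltr_pdivrMr // mul1r ltr_nat.
by rewrite /rho_k -mulrA; nra.
Qed.

(* [fine] sends the infinities to 0, so the ratio is trivially bounded unless
   both quantities are finite. *)
Lemma fine_ratio_le (R : realType) (K : R) (P2 P : \bar R) : 0 <= K -> (0 <= P2)%E ->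
  (0 <= P)%E -> (P2 <= K%:E * (P * P))%E -> fine P2 / fine P ^+ 2 <= K.
Proof.
move=> K0 P20; case: P => [p| |] //= p0; last by rewrite expr0n /= invr0 mulr0.
have [->|pn0] := eqVneq p 0; first by rewrite expr0n /= invr0 mulr0.
have pp : 0 < p by rewrite lt_neqAle eq_sym pn0 -lee_fin.
case: P2 P20 => [r| |] //= _; rewrite -!EFinM lee_fin => rK.
by rewrite ler_pdivrMr ?exprn_gt0 // expr2.
Qed.

Theorem lemma4p2 (R : realType) (n m k : nat) (delta : R) :
  (2 <= n)%N -> (1 <= m)%N -> 0 < delta -> (0 < k)%N -> (k < n)%N ->
  Rk n m k delta <=
    powR (1 - rho_k R n k ^+ 2) (- ((m * (m + 1))%:R / 4))
    * expR (`|rho_k R n k| * m%:R * delta ^+ 2).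
Proof.
move=> _ _ _ k0 kn; apply: fine_ratio_le.
- by rewrite mulr_ge0 ?powR_ge0 ?expR_ge0.
- by rewrite goe_pair_probE; apply: iter_int_ge0 => w; rewrite lee_fin goe_pair_ball_dens_ge0.
- by rewrite goe_probE; apply: iter_int_ge0 => v; rewrite lee_fin goe_ball_dens_ge0.
- exact/goe_pair_prob_le/sqr_rho_k_lt1.
Qed.
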